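(* Let $\mathcal{A}$ be a nonnegative weakly irreducible tensor of order $m$ and dimension $n$ which is spectral $\ell$-symmetric. Then $(\mathbb{P}\mathbb{V},\circ)$ is an abelian group which contains $\mathbb{P}\mathbb{V}_0$ as a subgroup and $\mathbb{P}\mathbb{V}_j$ as a coset of $\mathbb{P}\mathbb{V}_0$ for each $j\in[\ell-1]$, and the map $\Psi:\mathbb{P}\mathbb{V}\to\mathfrak{D}$, $y\mapsto D_y$, is a group isomorphism which sends $\mathbb{P}\mathbb{V}_j$ onto $\mathfrak{D}^{(j)}$ for $j=0,1,\ldots,\ell-1$.
   Context: Tensors: order $m$, dimension $n$, entries $a_{i_1\cdots i_m}$, $i_k\in[n]$. For $x\in\mathbb{C}^n$, $(\mathcal{A}x^{m-1})_i=\sum_{i_2,\dots,i_m}a_{ii_2\cdots i_m}x_{i_2}\cdots x_{i_m}$, $x^{[m-1]}=(x_i^{m-1})_i$; $\lambda$ is an eigenvalue with eigenvector $x\ne0$ if $\mathcal{A}x^{m-1}=\lambda x^{[m-1]}$. Spectrum $\mathrm{Spec}(\mathcal{A})$: multiset of roots of $\det(\lambda\mathcal{I}-\mathcal{A})$ (resultant-based characteristic polynomial); $\rho(\mathcal{A})$: largest modulus of an eigenvalue. Weakly irreducible: the digraph on $[n]$ with arc $(i,j)$ whenever some $a_{ii_2\cdots i_m}\neq0$ with $j\in\{i_2,\dots,i_m\}$ is strongly connected. Spectral $\ell$-symmetric: $\mathrm{Spec}(\mathcal{A})=e^{\mathrm{i}2\pi/\ell}\mathrm{Spec}(\mathcal{A})$.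 For diagonal $P,Q$, $(P\mathcal{A}Q)_{i_1\cdots i_m}=p_{i_1}a_{i_1\cdots i_m}q_{i_2}\cdots q_{i_m}$. $\mathfrak{D}^{(j)}$ ($j=0,\dots,\ell-1$) is the set of invertible diagonal $D$ with $d_{11}=1$ and $\mathcal{A}=e^{-\mathrm{i}2\pi j/\ell}D^{-(m-1)}\mathcal{A}D$, and $\mathfrak{D}=\bigcup_j\mathfrak{D}^{(j)}$. Known facts: for nonnegative weakly irreducible $\mathcal{A}$, $\rho(\mathcal{A})$ is an eigenvalue with a positive eigenvector unique up to scaling, and every eigenvector for an eigenvalue of modulus $\rho(\mathcal{A})$ has no zero entries. Let $\lambda_j=\rho(\mathcal{A})e^{\mathrm{i}2\pi j/\ell}$ and let $\mathbb{P}\mathbb{V}_j$ be the set of eigenvectors $y$ of $\mathcal{A}$ for $\lambda_j$ normalized so that $y_1=1$ (one representative per projective eigenvector); $\mathbb{P}\mathbb{V}=\bigcup_{j=0}^{\ell-1}\mathbb{P}\mathbb{V}_j$. Let $v_p\in\mathbb{P}\mathbb{V}_0$ be the positive one. For $y\in\mathbb{P}\mathbb{V}$, $D_y=\mathrm{diag}(y_1/|y_1|,\dots,y_n/|y_n|)$, and $y\circ\hat y:=D_yD_{\hat y}v_p$. *)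

From HB Require Import structures.
From mathcomp Require Import all_boot all_order all_algebra.
From mathcomp Require Import reals trigo.
From mathcomp Require Import complex.
Set Implicit Arguments. Unset Strict Implicit. Unset Printing Implicit Defensive.
Import Order.TTheory GRing.Theory Num.Theory.
Local Open Scope ring_scope.

Section Tensors.
Variable R : realType.
Local Notation C := R[i].

Definition expi (theta : R) : C := Complex (cos theta) (sin theta).

Definition rootu (l : nat) (j : int) : C := expi (2 * pi * j%:~R / l%:R).

Variables (m n : nat).
(* A tensor of order m and dimension n.+1 : entry a_{i i_2 ... i_m} is
   A i [tuple i_2; ...; i_m]. *)
Definition tensor := 'I_n.+1 -> (m.-1).-tuple 'I_n.+1 -> C.
Definition vect := 'cV[C]_n.+1.

Implicit Types (A : tensor) (x y : vect) (D P Q : 'M[C]_n.+1).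

Definition tapply A x (i : 'I_n.+1) : C :=
  \sum_(t : (m.-1).-tuple 'I_n.+1) A i t * \prod_(s <- t) x s 0.

Definition eigenpair A (lam : C) x : Prop :=
  x != 0 /\ forall i, tapply A x i = lam * x i 0 ^+ (m.-1).

Definition eigenvalue A (lam : C) : Prop := exists x, eigenpair A lam x.

Definition is_spectral_radius A (rho : C) : Prop :=
  (exists2 lam, eigenvalue A lam & `|lam| = rho) /\
  (forall lam, eigenvalue A lam -> `|lam| <= rho).

Definition nonneg_tensor A : Prop := forall i t, 0 <= A i t.

Definition tensor_digraph A : rel 'I_n.+1 :=
  fun i j => [exists t : (m.-1).-tuple 'I_n.+1, (A i t != 0) && (j \in t)].

Definition weakly_irreducible A : Prop :=
  forall i j, connect (tensor_digraph A) i j.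

(* Spec(A) = e^{i 2 pi / l} Spec(A), spectrum taken as the set of eigenvalues *)
Definition spectral_symmetric A (l : nat) : Prop :=
  forall mu, eigenvalue A mu <-> exists2 lam, eigenvalue A lam & mu = rootu l 1 * lam.

Definition tmul P A Q : tensor :=
  fun i t => P i i * A i t * \prod_(s <- t) Q s s.

Definition frakD A (l j : nat) D : Prop :=
  [/\ is_diag_mx D, D \in unitmx, D ord0 ord0 = 1 &
      forall i t, A i t =
        rootu l (- j%:Z) * tmul ((invmx D) ^+ (m.-1)) A D i t].

Definition frakD_all A (l : nat) D : Prop := exists2 j, (j < l)%N & frakD A l j D.

Definition lambda_j (rho : C) (l j : nat) : C := rho * rootu l j%:Z.

Definition PVj A (rho : C) (l j : nat) y : Prop :=
  eigenpair A (lambda_j rho l j) y /\ y ord0 0 = 1.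

Definition PV A (rho : C) (l : nat) y : Prop := exists2 j, (j < l)%N & PVj A rho l j y.

Definition Dmat y : 'M[C]_n.+1 := diag_mx (\row_i (y i 0 / `|y i 0|)).

Definition circ (vp y yhat : vect) : vect := Dmat y *m Dmat yhat *m vp.

End Tensors.

(* If [|w| = 1] and [A y^(m-1) = rho w y^[m-1]], the triangle inequality makes
   [|y|] a subeigenvector for [rho]; the maximal ratio [max_i |y_i| / (v_p)_i] is
   attained on a set closed under the arcs of the digraph of [A], so weak
   irreducibility forces [|y| = c v_p].  Equality in the triangle inequality then
   says that the phases [d = y / |y|] satisfy [prod_(s in t) d_s = w d_i^(m-1)]
   whenever [a_(i t) <> 0], which is the entrywise form of [A = w^-1 D^-(m-1) A D]
   for [D = diag d].  Conversely such a [D] makes [D v_p] an eigenvector for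
   [rho w].  Hence [y |-> D_y] is a bijection from [PV_j] onto [D^(j)] with inverse
   [D |-> D v_p]; since [y o yhat = D_y D_yhat v_p] it transports the multiplication
   of diagonal matrices, which sends [D^(j) x D^(k)] into [D^(j+k mod l)].
   Spectral symmetry makes every [PV_j] nonempty. *)

From Pilot Require Import Defs.
From HB Require Import structures.
From mathcomp Require Import all_boot all_order all_algebra.
From mathcomp Require Import reals trigo.
From mathcomp Require Import complex.
From mathcomp Require Import ring.
Import Order.TTheory GRing.Theory Num.Theory.
Local Open Scope ring_scope.
Set Implicit Arguments. Unset Strict Implicit. Unset Printing Implicit Defensive.

Section RootsOfUnity.
Variable R : realType.

Lemma expiD (a b : R) : expi (a + b) = expi a * expi b.
Proof. by rewrite /expi cosD sinD; simpc; rewrite (addrC (sin a * cos b)). Qed.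

Lemma rootuD l (a b : int) : rootu R l (a + b) = rootu R l a * rootu R l b.
Proof. by rewrite /rootu -expiD intrD mulrDr mulrDl. Qed.

Lemma rootu0 l : rootu R l 0 = 1.
Proof. by rewrite /rootu mulr0 mul0r /expi cos0 sin0. Qed.

Lemma norm_rootu l a : `|rootu R l a| = 1.
Proof. by rewrite normc_def /= cos2Dsin2 sqrtr1. Qed.

Lemma rootu_neq0 l a : rootu R l a != 0.
Proof. by rewrite -normr_eq0 norm_rootu oner_eq0. Qed.

Lemma rootuN l a : rootu R l (- a) = (rootu R l a)^-1.
Proof.
by apply: (mulIf (rootu_neq0 l a)); rewrite -rootuD addNr rootu0 mulVf ?rootu_neq0.
Qed.

Lemma rootuMn l (j k : nat) : rootu R l (j * k)%N = rootu R l j ^+ k.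
Proof.
elim: k => [|k IHk]; first by rewrite muln0 rootu0.
by rewrite mulnS PoszD rootuD IHk exprS.
Qed.

(* No [0 < l] needed: [rootu R 0 j] is [expi 0] since [x / 0 = 0]. *)
Lemma rootu_id l : rootu R l l = 1.
Proof.
case: l => [|l]; first exact: rootu0.
by rewrite /rootu mulfK ?pnatr_eq0 // /expi mulr_natl cos2pi sin2pi.
Qed.

Lemma rootu_mod l (j : nat) : rootu R l (j %% l)%N = rootu R l j.
Proof.
by rewrite {2}(divn_eq j l) mulnC PoszD rootuD rootuMn rootu_id expr1n mul1r.
Qed.

Lemma rootu_subn l (j : nat) : (j <= l)%N -> rootu R l (l - j)%N = (rootu R l j)^-1.
Proof.
move=> le_jl; apply: (mulIf (rootu_neq0 l j)).
by rewrite -rootuD -PoszD subnK // rootu_id mulVf ?rootu_neq0.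
Qed.

End RootsOfUnity.

Section Phase.
Variable F : numFieldType.
Implicit Types x y : F.

Definition phase x := x / `|x|.

Lemma phaseM x y : phase (x * y) = phase x * phase y.
Proof. by rewrite /phase normrM invfM mulrACA. Qed.

Lemma phase_gt0 x : 0 < x -> phase x = 1.
Proof. by move=> x_gt0; rewrite /phase gtr0_norm // divff // gt_eqF. Qed.

Lemma phase_norm1 x : `|x| = 1 -> phase x = x.
Proof. by rewrite /phase => ->; rewrite divr1. Qed.

Lemma norm_phase x : x != 0 -> `|phase x| = 1.
Proof. by move=> x_neq0; rewrite /phase normf_div normr_id divff // normr_eq0. Qed.

Lemma phaseK x : phase (phase x) = phase x.
Proof.
have [-> | x_neq0] := eqVneq x 0; first by rewrite /phase !mul0r.
exact/phase_norm1/norm_phase.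
Qed.

Lemma phase_mul_norm x : phase x * `|x| = x.
Proof.
have [-> | x_neq0] := eqVneq x 0; first by rewrite normr0 mulr0.
by rewrite /phase divfK // normr_eq0.
Qed.

End Phase.

Lemma prodr_scale_seq (R : comNzRingType) (I : Type) (r : seq I) (c : R) (f : I -> R) :
  \prod_(i <- r) (c * f i) = c ^+ size r * \prod_(i <- r) f i.
Proof. by rewrite big_split /= big_const_seq count_predT iter_mulr_1. Qed.

Lemma ler_prod_eq_in (R : numDomainType) (I : eqType) (r : seq I) (f g : I -> R) :
  (forall i, 0 <= f i <= g i) -> (forall i, 0 < g i) ->
  \prod_(i <- r) f i = \prod_(i <- r) g i -> {in r, f =1 g}.
Proof.
move=> le_fg g_gt0 eq_prod k kr; apply/eqP; apply: contraT => neq_fg.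
have lt_fg : f k < g k by rewrite lt_neqAle neq_fg (andP (le_fg k)).2.
move: eq_prod; rewrite !(big_rem k kr) /= => /eqP; rewrite lt_eqF //.
apply: (le_lt_trans (ler_wpM2l (andP (le_fg k)).1 (ler_prod _ _))) => [i _|].
  exact: le_fg.
by rewrite ltr_pM2r // prodr_gt0.
Qed.

Lemma connect_stable (T : finType) (e : rel T) (a : pred T) :
  (forall x y, e x y -> a x -> a y) -> forall x y, connect e x y -> a x -> a y.
Proof.
move=> a_stable x y /connectP[p]; elim: p x => [|z p IHp] x /=; first by move=> _ ->.
by case/andP=> e_xz p_z y_last a_x; apply: IHp p_z y_last (a_stable _ _ e_xz a_x).
Qed.

Section DiagonalScaling.
Variables (R : realType) (m n : nat) (A : tensor R m n).
Local Notation C := R[i].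
Implicit Types (d e : 'I_n.+1 -> C) (w : C).

Definition diagf d : 'M[C]_n.+1 := diag_mx (\row_i d i).

(* The entrywise form of [A = w^-1 D^-(m-1) A D] for [D = diagf d]. *)
Definition twist_invariant w d :=
  forall i t, A i t != 0 -> \prod_(s <- t) d s = w * d i ^+ m.-1.

Lemma eq_diagf d e : d =1 e -> diagf d = diagf e.
Proof. by move=> de; congr diag_mx; apply/rowP => i; rewrite !mxE de. Qed.

Lemma diagf_diag d i : diagf d i i = d i.
Proof. by rewrite !mxE eqxx mulr1n. Qed.

Lemma diagf_mulmx_entry d (x : vect R n) i : (diagf d *m x) i 0 = d i * x i 0.
Proof. by rewrite mul_diag_mx !mxE. Qed.

Lemma diagfM d e : diagf d *m diagf e = diagf (fun i => d i * e i).
Proof. by rewrite mulmx_diag; apply: eq_diagf => i; rewrite !mxE. Qed.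

Lemma diagf1 : diagf (fun=> 1) = 1%:M.
Proof. by rewrite -diag_const_mx; congr diag_mx; apply/rowP => i; rewrite !mxE. Qed.

Lemma diagfX d k : diagf d ^+ k = diagf (fun i => d i ^+ k).
Proof.
elim: k => [|k IHk]; first by rewrite diagf1.
by rewrite exprS IHk -mulmxE diagfM; apply: eq_diagf => i; rewrite exprS.
Qed.

Lemma unitmx_diagf d : diagf d \in unitmx <-> forall i, d i != 0.
Proof.
rewrite unitmxE det_diag unitfE.
under eq_bigr do rewrite mxE.
by split => [/prodf_neq0 d_neq0 i | d_neq0]; [exact: d_neq0 | exact/prodf_neq0].
Qed.

Lemma invmx_diagf d : (forall i, d i != 0) ->
  invmx (diagf d) = diagf (fun i => (d i)^-1).
Proof.
move=> d_neq0; have dV : diagf d *m diagf (fun i => (d i)^-1) = 1%:M.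
  by rewrite diagfM -diagf1; apply: eq_diagf => i; rewrite mulfV.
by rewrite -[LHS]mulmx1 -dV mulmxA mulVmx ?mul1mx // unitmx_diagf.
Qed.

Lemma tmul_diagf d : (forall i, d i != 0) -> forall i t,
  tmul (invmx (diagf d) ^+ m.-1) A (diagf d) i t =
  (d i ^+ m.-1)^-1 * A i t * \prod_(s <- t) d s.
Proof.
move=> d_neq0 i t; rewrite /tmul invmx_diagf // diagfX diagf_diag exprVn.
by congr (_ * _); apply: eq_bigr => s _; rewrite diagf_diag.
Qed.

Lemma frakD_diagfE l j d : (forall i, d i != 0) ->
  frakD A l j (diagf d) <-> d ord0 = 1 /\ twist_invariant (rootu R l j) d.
Proof.
move=> d_neq0.
have twistE i t :
    A i t = rootu R l (- j%:Z) * tmul (invmx (diagf d) ^+ m.-1) A (diagf d) i t <->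
    (A i t != 0 -> \prod_(s <- t) d s = rootu R l j * d i ^+ m.-1).
  rewrite tmul_diagf // rootuN.
  have [-> | Ait] := eqVneq (A i t) 0; first by rewrite !(mulr0, mul0r).
  have dX_neq0 : d i ^+ m.-1 != 0 by rewrite expf_neq0.
  have w_neq0 := rootu_neq0 R l j.
  split => [Aeq _ | /(_ isT) ->]; last by field; rewrite dX_neq0.
  apply: (mulfI Ait); rewrite [in RHS]Aeq; field.
  by rewrite dX_neq0 w_neq0.
split => [[_ _ d1 Aeq] | [d1 d_twist]].
  by split => [|i t]; [rewrite -diagf_diag | apply/twistE].
split; [exact: diag_mx_is_diag | exact/unitmx_diagf | by rewrite diagf_diag |].
by move=> i t; apply/twistE/d_twist.
Qed.

Lemma frakD_diagf l j D : frakD A l j D -> exists2 d, forall i, d i != 0 & D = diagf d.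
Proof.
case=> /diag_mxP[r ->] r_unit _ _.
have r_diagf : diag_mx r = diagf (fun i => r 0 i).
  by congr diag_mx; apply/rowP => i; rewrite mxE.
by rewrite r_diagf in r_unit *; exists (fun i => r 0 i) => //; apply/unitmx_diagf.
Qed.

Lemma twist_invariantM w w' d e : twist_invariant w d -> twist_invariant w' e ->
  twist_invariant (w * w') (fun i => d i * e i).
Proof.
move=> d_twist e_twist i t Ait.
by rewrite big_split /= (d_twist i t Ait) (e_twist i t Ait) exprMn mulrACA.
Qed.

Lemma twist_invariantV w d : twist_invariant w d ->
  twist_invariant w^-1 (fun i => (d i)^-1).
Proof. by move=> d_twist i t Ait; rewrite prodfV (d_twist i t Ait) invfM exprVn. Qed.

Lemma frakDM l j k D E : frakD A l j D -> frakD A l k E -> frakD A l (j + k) (D *m E).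
Proof.
move=> /[dup] FD /frakD_diagf[d d_neq0 DE] /[dup] FE /frakD_diagf[e e_neq0 EE].
move: FD FE; rewrite DE EE !frakD_diagfE // => -[d1 d_twist] [e1 e_twist].
have de_neq0 i : d i * e i != 0 by rewrite mulf_neq0.
rewrite diagfM frakD_diagfE // d1 e1 mulr1 PoszD rootuD.
by split; last exact: twist_invariantM.
Qed.

Lemma frakDV l j D : (j <= l)%N -> frakD A l j D -> frakD A l (l - j) (invmx D).
Proof.
move=> le_jl /[dup] FD /frakD_diagf[d d_neq0 DE].
have dV_neq0 i : (d i)^-1 != 0 by rewrite invr_eq0.
move: FD; rewrite DE invmx_diagf // !frakD_diagfE // => -[d1 d_twist].
by rewrite d1 invr1 rootu_subn //; split; last exact: twist_invariantV.
Qed.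

Lemma tapply_scale (a : C) (x : vect R n) i :
  tapply A (a *: x) i = a ^+ m.-1 * tapply A x i.
Proof.
rewrite /tapply mulr_sumr; apply: eq_bigr => t _.
under eq_bigr do rewrite mxE.
by rewrite prodr_scale_seq size_tuple mulrCA.
Qed.

End DiagonalScaling.

Section PerronFrobenius.
Variables (R : realType) (m n : nat) (A : tensor R m n) (rho : R[i]) (vp : vect R n).
Local Notation C := R[i].
Local Notation v i := (vp i 0).
Hypothesis A_ge0 : nonneg_tensor A.
Hypothesis A_irr : weakly_irreducible A.
Hypothesis rho_ge0 : 0 <= rho.
Hypothesis vp_gt0 : forall i, 0 < v i.
Hypothesis vp_eigen : forall i, tapply A vp i = rho * v i ^+ m.-1.

Lemma vp_neq0 i : v i != 0.
Proof. by rewrite gt_eqF. Qed.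

Lemma subeigen_arc (z : 'I_n.+1 -> C) (c : C) i k :
  0 < c -> (forall s, 0 <= z s <= c * v s) ->
  rho * z i ^+ m.-1 <= \sum_t A i t * \prod_(s <- t) z s ->
  z i = c * v i -> tensor_digraph A i k -> z k = c * v k.
Proof.
move=> c_gt0 le_z z_sub zi /existsP[t /andP[Ait kt]].
pose gap u := A i u * \prod_(s <- u) (c * v s) - A i u * \prod_(s <- u) z s.
have gap_ge0 u : 0 <= gap u.
  by rewrite subr_ge0 ler_wpM2l // ler_prod // => s _; apply: le_z.
have sum_gap : \sum_u gap u = 0.
  apply/eqP; rewrite eq_le sumr_ge0 // andbT sumrB subr_le0.
  suff -> : \sum_u A i u * \prod_(s <- u) (c * v s) = rho * z i ^+ m.-1 by [].
  under eq_bigr do rewrite prodr_scale_seq size_tuple mulrCA.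
  by rewrite -mulr_sumr -/(tapply A vp i) vp_eigen zi exprMn mulrCA.
have /eqP := psumr_eq0P (fun u _ => gap_ge0 u) sum_gap isT (i := t).
rewrite subr_eq0 => /eqP /(mulfI Ait) eq_prod.
apply: (ler_prod_eq_in _ _ (esym eq_prod) kt) => s; first exact: le_z.
by rewrite mulr_gt0.
Qed.

Lemma subeigen_proportional (z : 'I_n.+1 -> C) :
  (forall i, 0 <= z i) ->
  (forall i, rho * z i ^+ m.-1 <= \sum_t A i t * \prod_(s <- t) z s) ->
  exists2 c, 0 <= c & forall i, z i = c * v i.
Proof.
move=> z_ge0 z_sub.
have ratio_real i : z i / v i \is Num.real by rewrite ger0_real // divr_ge0 // ltW.
have [i0 _ ratio_max] :=
  @real_arg_maxP _ _ ord0 xpredT (fun i => z i / v i) isT (fun i _ => ratio_real i).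
set c := z i0 / v i0 in ratio_max.
have c_ge0 : 0 <= c by rewrite divr_ge0 // ltW.
have le_z s : 0 <= z s <= c * v s by rewrite z_ge0 -ler_pdivrMr //; apply: ratio_max.
exists c => //; have [c0 | c_neq0] := eqVneq c 0.
  by move=> i; apply/le_anti; rewrite andbC; have := le_z i; rewrite c0 !mul0r.
have c_gt0 : 0 < c by rewrite lt_neqAle eq_sym c_neq0.
have z_i0 : z i0 = c * v i0 by rewrite /c divfK ?vp_neq0.
move=> k; apply/eqP.
apply: (connect_stable (a := fun i => z i == c * v i) _ (A_irr i0 k)); last exact/eqP.
by move=> i j e_ij /eqP zi; rewrite (subeigen_arc c_gt0 le_z (z_sub i) zi e_ij).
Qed.

Lemma eigen_norm_proportional (w : C) (y : vect R n) :
  `|w| = 1 -> eigenpair A (rho * w) y ->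
  exists2 c, 0 < c & forall i, `|y i 0| = c * v i.
Proof.
move=> w1 [y_neq0 y_eigen].
have [c c_ge0 yc] : exists2 c, 0 <= c & forall i, `|y i 0| = c * v i.
  apply: subeigen_proportional => i; first exact: normr_ge0.
  have -> : rho * `|y i 0| ^+ m.-1 = `|tapply A y i|.
    by rewrite y_eigen !normrM w1 mulr1 normrX ger0_norm.
  apply: (le_trans (ler_norm_sum _ _ _)); apply: ler_sum => t _.
  by rewrite normrM normr_prod ger0_norm.
exists c => //; rewrite lt_neqAle c_ge0 andbT eq_sym.
apply: contraNneq y_neq0 => c0; apply/eqP/matrixP => i j.
by rewrite (ord1 j) mxE; apply/eqP; rewrite -normr_eq0 yc c0 mul0r.
Qed.

Lemma eigen_phase (w : C) (y : vect R n) :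
  `|w| = 1 -> eigenpair A (rho * w) y -> (forall i, `|y i 0| = v i) ->
  twist_invariant A w (fun i => phase (y i 0)).
Proof.
move=> w1 [_ y_eigen] y_norm i t Ait.
set d := fun s => phase (y s 0).
have y_dv s : y s 0 = d s * v s by rewrite -y_norm phase_mul_norm.
have d1 s : `|d s| = 1 by rewrite norm_phase // -normr_eq0 y_norm vp_neq0.
set u := w * d i ^+ m.-1.
have u1 : `|u| = 1 by rewrite normrM w1 normrX d1 expr1n mulr1.
have u_neq0 : u != 0 by rewrite -normr_eq0 u1 oner_eq0.
have le_term t' : `|A i t' * \prod_(s <- t') y s 0 / u| <= A i t' * \prod_(s <- t') v s.
  rewrite normf_div u1 divr1 normrM normr_prod ger0_norm //.
  by rewrite (eq_bigr _ (fun s _ => y_norm s)).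
have eq_sum : \sum_t' (A i t' * \prod_(s <- t') y s 0 / u) =
              \sum_t' A i t' * \prod_(s <- t') v s.
  rewrite -mulr_suml -/(tapply A y i) -/(tapply A vp i) y_eigen vp_eigen y_dv exprMn.
  have di_neq0 : d i != 0 by rewrite -normr_eq0 d1 oner_eq0.
  have w_neq0 : w != 0 by rewrite -normr_eq0 w1 oner_eq0.
  by rewrite /u; field; rewrite expf_neq0 ?w_neq0.
have := normC_sum_upper (fun t' _ => le_term t') eq_sum isT (i := t).
rewrite (eq_bigr _ (fun s _ => y_dv s)) big_split /= => eq_term.
have Av_neq0 : A i t * \prod_(s <- t) v s != 0.
  by rewrite mulf_neq0 // prodf_seq_neq0; apply/allP => s _; exact: vp_neq0.
apply: (mulIf (invr_neq0 u_neq0)); rewrite mulfV //; apply: (mulfI Av_neq0).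
by rewrite mulr1 -[RHS]eq_term; ring.
Qed.

Lemma tapply_diagf_vp (w : C) d : twist_invariant A w d ->
  forall i, tapply A (diagf d *m vp) i = rho * w * (diagf d *m vp) i 0 ^+ m.-1.
Proof.
move=> d_twist i; rewrite diagf_mulmx_entry exprMn.
transitivity (w * d i ^+ m.-1 * tapply A vp i); last by rewrite vp_eigen; ring.
rewrite /tapply mulr_sumr; apply: eq_bigr => t _.
rewrite (eq_bigr _ (fun s _ => diagf_mulmx_entry d vp s)) big_split /=.
have [-> | Ait] := eqVneq (A i t) 0; first by rewrite !(mul0r, mulr0).
by rewrite (d_twist i t Ait); ring.
Qed.

Lemma Dmat_diagf (y : vect R n) : Dmat y = diagf (fun i => phase (y i 0)).
Proof. by []. Qed.

Lemma Dmat_diagf_vp d : Dmat (diagf d *m vp) = diagf (fun i => phase (d i)).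
Proof.
rewrite Dmat_diagf; apply: eq_diagf => i.
by rewrite diagf_mulmx_entry phaseM (phase_gt0 (vp_gt0 i)) mulr1.
Qed.

Lemma Dmat_vp : Dmat vp = 1%:M.
Proof. by rewrite -diagf1 Dmat_diagf; apply: eq_diagf => i; rewrite phase_gt0. Qed.

Lemma Dmat_mul_vp (y : vect R n) : (forall i, `|y i 0| = v i) -> Dmat y *m vp = y.
Proof.
move=> y_norm; apply/matrixP => i k; rewrite (ord1 k) diagf_mulmx_entry -y_norm.
exact: phase_mul_norm.
Qed.

Lemma Dmat_circ (y z : vect R n) : Dmat (circ vp y z) = Dmat y *m Dmat z.
Proof.
have -> : circ vp y z = diagf (fun i => phase (y i 0) * phase (z i 0)) *m vp.
  by rewrite /circ !Dmat_diagf diagfM.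
rewrite Dmat_diagf_vp !Dmat_diagf diagfM.
by apply: eq_diagf => i; rewrite phaseM !phaseK.
Qed.

Lemma circA (x y z : vect R n) : circ vp x (circ vp y z) = circ vp (circ vp x y) z.
Proof. by rewrite {1}/circ Dmat_circ [RHS]/circ Dmat_circ /circ !mulmxA. Qed.

Lemma circC (y z : vect R n) : circ vp y z = circ vp z y.
Proof. by rewrite /circ diag_mxC. Qed.

Variable l : nat.
Hypothesis vp1 : v ord0 = 1.
Local Notation PVj := (PVj A rho l).
Local Notation PV := (PV A rho l).

Lemma twist_invariant_norm1 (w : C) d : `|w| = 1 -> d ord0 = 1 ->
  twist_invariant A w d -> forall i, `|d i| = 1.
Proof.
move=> w1 d1 d_twist.
have y_eigen : eigenpair A (rho * w) (diagf d *m vp).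
  split; last exact: tapply_diagf_vp.
  apply/eqP => /matrixP/(_ ord0 0)/eqP.
  by rewrite diagf_mulmx_entry d1 vp1 mxE mulr1 oner_eq0.
have [c _ yc] := eigen_norm_proportional w1 y_eigen.
have c1 : c = 1.
  by have := yc ord0; rewrite diagf_mulmx_entry d1 vp1 !mulr1 normr1.
move=> i; apply: (mulIf (vp_neq0 i)); rewrite mul1r.
by have := yc i; rewrite c1 mul1r diagf_mulmx_entry normrM (gtr0_norm (vp_gt0 i)).
Qed.

Lemma PVj_norm j y : PVj j y -> forall i, `|y i 0| = v i.
Proof.
case=> y_eigen y1; have [c _ yc] := eigen_norm_proportional (norm_rootu _ _ _) y_eigen.
have c1 : c = 1 by have := yc ord0; rewrite y1 vp1 normr1 mulr1.
by move=> i; rewrite yc c1 mul1r.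
Qed.

Lemma PVj_Dmat j y : PVj j y -> Dmat y *m vp = y.
Proof. by move/PVj_norm; exact: Dmat_mul_vp. Qed.

Lemma PVj_frakD j y : PVj j y -> frakD A l j (Dmat y).
Proof.
move=> /[dup] [[y_eigen y1]] /PVj_norm y_norm.
rewrite Dmat_diagf frakD_diagfE => [|i]; last first.
  by rewrite -normr_eq0 norm_phase ?oner_eq0 // -normr_eq0 y_norm vp_neq0.
split; first by rewrite y1 phase_gt0.
exact: eigen_phase (norm_rootu _ _ _) y_eigen y_norm.
Qed.

Lemma frakD_PVj j D : frakD A l j D -> PVj j (D *m vp) /\ Dmat (D *m vp) = D.
Proof.
move=> /[dup] FD /frakD_diagf[d d_neq0 DE]; move: FD.
rewrite DE frakD_diagfE // => -[d1 d_twist].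
have d_norm := twist_invariant_norm1 (norm_rootu _ _ _) d1 d_twist.
split; last by rewrite Dmat_diagf_vp; apply: eq_diagf => i; rewrite phase_norm1.
split; last by rewrite diagf_mulmx_entry d1 vp1 mulr1.
split; last exact: tapply_diagf_vp.
apply/eqP => /matrixP/(_ ord0 0)/eqP.
by rewrite diagf_mulmx_entry d1 vp1 mxE mulr1 oner_eq0.
Qed.

Lemma PVj_mod j : PVj (j %% l) = PVj j.
Proof. by rewrite /Defs.PVj /lambda_j rootu_mod. Qed.

Lemma PVj_circ j k y z : PVj j y -> PVj k z -> PVj (j + k) (circ vp y z).
Proof. by move=> /PVj_frakD Dy /PVj_frakD Dz; case: (frakD_PVj (frakDM Dy Dz)). Qed.

Lemma PVj_invert j y : (j <= l)%N -> PVj j y ->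
  exists2 z, PVj (l - j) z & circ vp y z = vp.
Proof.
move=> le_jl /PVj_frakD Dy; have [Pz Dz] := frakD_PVj (frakDV le_jl Dy).
exists (invmx (Dmat y) *m vp) => //.
by rewrite /circ Dz mulmxV ?mul1mx //; case: Dy.
Qed.

Lemma circ_vp_l j y : PVj j y -> circ vp vp y = y.
Proof. by move=> Py; rewrite /circ Dmat_vp mul1mx (PVj_Dmat Py). Qed.

Lemma PVj_coset j y z : (j <= l)%N -> PVj j y ->
  PVj j z <-> exists2 w, PVj 0 w & z = circ vp y w.
Proof.
move=> le_jl Py; split => [Pz | [w Pw ->]]; last by rewrite -[j]addn0; apply: PVj_circ.
have [y' Py' yy'] := PVj_invert le_jl Py.
exists (circ vp y' z); last by rewrite circA yy' (circ_vp_l Pz).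
by have := PVj_circ Py' Pz; rewrite subnK // -PVj_mod modnn.
Qed.

Lemma eigenpair_normalize (w : C) x : `|w| = 1 -> eigenpair A (rho * w) x ->
  exists y, eigenpair A (rho * w) y /\ y ord0 0 = 1.
Proof.
move=> w1 /[dup] [[x_neq0 x_eigen]] /(eigen_norm_proportional w1)[c c_gt0 xc].
have x0_neq0 : x ord0 0 != 0.
  by rewrite -normr_eq0 xc mulf_neq0 ?gt_eqF ?vp_neq0.
exists ((x ord0 0)^-1 *: x); split; last by rewrite mxE mulVf.
split; first by rewrite scaler_eq0 negb_or invr_eq0 x0_neq0.
by move=> i; rewrite tapply_scale x_eigen mxE exprMn mulrCA.
Qed.

Lemma PVj_exists j : spectral_symmetric A l -> exists y, PVj j y.
Proof.
move=> A_sym; suff [x x_eigen] : Defs.eigenvalue A (rho * rootu R l j).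
  exact: eigenpair_normalize (norm_rootu _ _ _) x_eigen.
elim: j => [|j [x x_eigen]].
  exists vp; rewrite rootu0 mulr1; split => [|i]; last exact: vp_eigen.
  by apply/eqP => /matrixP/(_ ord0 0)/eqP; rewrite vp1 mxE oner_eq0.
apply/A_sym; exists (rho * rootu R l j); first by exists x.
by rewrite -addn1 PoszD rootuD; ring.
Qed.

Lemma PV0_circ y z : PVj 0 y -> PVj 0 z -> PVj 0 (circ vp y z).
Proof. exact: PVj_circ. Qed.

Lemma PV0_invert y : PVj 0 y -> exists2 z, PVj 0 z & circ vp y z = vp.
Proof.
move=> Py; have [z Pz yz] := PVj_invert (leq0n l) Py.
by exists z => //; move: Pz; rewrite subn0 -PVj_mod modnn.
Qed.

Lemma PV_Dmat_inj y z : PV y -> PV z -> Dmat y = Dmat z -> y = z.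
Proof. by move=> [j _ /PVj_Dmat yE] [k _ /PVj_Dmat zE] Dyz; rewrite -yE -zE Dyz. Qed.

Lemma PV_frakD_all y : PV y -> frakD_all A l (Dmat y).
Proof. by case=> j lt_jl /PVj_frakD; exists j. Qed.

Lemma Dmat_onto_frakD j D : frakD A l j D -> exists2 y, PVj j y & Dmat y = D.
Proof. by case/frakD_PVj; exists (D *m vp). Qed.

Lemma Dmat_onto_frakD_all D : frakD_all A l D -> exists2 y, PV y & Dmat y = D.
Proof. by case=> j lt_jl /Dmat_onto_frakD[y Py DE]; exists y => //; exists j. Qed.

Hypothesis l_gt0 : (0 < l)%N.

Lemma PV_circ y z : PV y -> PV z -> PV (circ vp y z).
Proof.
case=> j _ Py [k _ Pz]; exists ((j + k) %% l)%N; first exact: ltn_pmod.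
by rewrite PVj_mod; apply: PVj_circ.
Qed.

Lemma PV_invert y : PV y -> exists2 z, PV z & circ vp y z = vp.
Proof.
case=> j lt_jl Py; have [z Pz yz] := PVj_invert (ltnW lt_jl) Py.
by exists z => //; exists ((l - j) %% l)%N; rewrite ?ltn_pmod ?PVj_mod.
Qed.

End PerronFrobenius.

Theorem lemma3p1 (R : realType) (m n l : nat) (A : tensor R m n)
  (rho : R[i]) (vp : vect R n) :
  (2 <= m)%N -> (0 < l)%N ->
  nonneg_tensor A -> weakly_irreducible A -> spectral_symmetric A l ->
  is_spectral_radius A rho ->
  PVj A rho l 0 vp -> (forall i, 0 < vp i 0) ->
  let PV := PV A rho l in
  let PV0 := PVj A rho l 0 in
  let o := circ vp in
  (* (PV, o) is an abelian group *)
  [/\ (forall y z, PV y -> PV z -> PV (o y z)),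
      (forall x y z, PV x -> PV y -> PV z -> o x (o y z) = o (o x y) z),
      (forall y z, PV y -> PV z -> o y z = o z y) &
      exists e, [/\ PV e, (forall y, PV y -> o e y = y),
        (forall y, PV y -> exists2 z, PV z & o y z = e),
  (* PV_0 is a subgroup *)
        [/\ (forall y, PV0 y -> PV y), PV0 e,
            (forall y z, PV0 y -> PV0 z -> PV0 (o y z)) &
            (forall y, PV0 y -> exists2 z, PV0 z & o y z = e)] &
  (* PV_j is a coset of PV_0 for j in [l-1] *)
        (forall j, (1 <= j <= l.-1)%N ->
           exists2 y, PV y &
             forall z, PVj A rho l j z <-> exists2 w, PV0 w & z = o y w)]] /\
  (* Psi : y |-> D_y is a group isomorphism PV -> frak D *)
  [/\ (forall y, PV y -> frakD_all A l (Dmat y)),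
      (forall y z, PV y -> PV z -> Dmat y = Dmat z -> y = z),
      (forall D, frakD_all A l D -> exists2 y, PV y & Dmat y = D),
      (forall y z, PV y -> PV z -> Dmat (o y z) = Dmat y *m Dmat z) &
  (* Psi maps PV_j onto frak D^{(j)} *)
      (forall j, (j < l)%N ->
         (forall y, PVj A rho l j y -> frakD A l j (Dmat y)) /\
         (forall D, frakD A l j D -> exists2 y, PVj A rho l j y & Dmat y = D))].
Proof.
move=> _ l_gt0 A_ge0 A_irr A_sym rho_radius vp0 vp_gt0 PV PV0 o.
have rho_ge0 : 0 <= rho by case: rho_radius => -[lam _ <-].
have vp_eigen i : tapply A vp i = rho * vp i 0 ^+ m.-1.
  by rewrite vp0.1.2 /lambda_j rootu0 mulr1.
have vp1 : vp ord0 0 = 1 := vp0.2.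
split; split.
- exact: PV_circ.
- by move=> x y z _ _ _; apply: circA.
- by move=> y z _ _; apply: circC.
- exists vp; split.
  + by exists 0%N.
  + by move=> y [j _]; apply: circ_vp_l.
  + exact: PV_invert.
  + split => //; first by move=> y Py; exists 0%N.
    * exact: PV0_circ.
    * exact: PV0_invert.
  + move=> j /andP[_ le_jl]; have lt_jl : (j < l)%N by rewrite -ltnS prednK in le_jl.
    have [y Py] : exists y, PVj A rho l j y by apply: PVj_exists.
    by exists y; [exists j | move=> z; apply: PVj_coset; rewrite // ltnW].
- exact: PV_frakD_all.
- exact: PV_Dmat_inj.
- exact: Dmat_onto_frakD_all.
- by move=> y z _ _; apply: Dmat_circ.
- by move=> j _; split; [exact: PVj_frakD | exact: Dmat_onto_frakD].
Qed.
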